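(* Suppose $(P,n,a,b)$ is good. Let $m$ be the minimal integer $m\ge n+1$ such that $Q(x)=P(x)-x^m$ satisfies $Q(x)>0$ for all $x\in[a,b]$. Then $(Q,m,a,b)$ is good.
   Context: Let $\mathcal{B}_n$ be the set of polynomials $1+\sum_{k=1}^n a_kx^k$ with $a_k\in\{-1,0,1\}$. A quadruple $(P,n,a,b)$ is called good if $P\in\mathcal{B}_n$, $0.5<a<b<1$, $P(a)>a^{n+1}/(1-a)$, $P(b)>b^{n+1}/(1-b)$, $P(x)>0$ for all $x\in[a,b]$, and there exists $x\in(a,b)$ with $P(x)<x^{n+1}/(1-x)$. *)

From HB Require Import structures.
From mathcomp Require Import all_boot all_order all_algebra.
From mathcomp Require Import reals.
Set Implicit Arguments. Unset Strict Implicit. Unset Printing Implicit Defensive.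
Import Order.TTheory GRing.Theory Num.Theory.
Local Open Scope ring_scope.

Definition in_B (R : realType) (n : nat) (P : {poly R}) : Prop :=
  P`_0 = 1 /\
  (forall k : nat, (1 <= k <= n)%N -> [|| P`_k == -1, P`_k == 0 | P`_k == 1]) /\
  (forall k : nat, (n < k)%N -> P`_k = 0).

Definition good (R : realType) (P : {poly R}) (n : nat) (a b : R) : Prop :=
  in_B n P /\
  (2^-1 < a /\ a < b /\ b < 1) /\
  a ^+ n.+1 / (1 - a) < P.[a] /\
  b ^+ n.+1 / (1 - b) < P.[b] /\
  (forall x : R, a <= x <= b -> 0 < P.[x]) /\
  (exists x : R, a < x < b /\ P.[x] < x ^+ n.+1 / (1 - x)).

Definition pos_on (R : realType) (Q : {poly R}) (a b : R) : Prop :=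
  forall x : R, a <= x <= b -> 0 < Q.[x].

From HB Require Import structures.
From mathcomp Require Import all_boot all_order all_algebra.
From mathcomp Require Import reals boolp.
From mathcomp Require Import ring lra.

Set Implicit Arguments.
Unset Strict Implicit.
Unset Printing Implicit Defensive.
Import Order.TTheory GRing.Theory Num.Theory.
Local Open Scope ring_scope.

(* Subtracting X^m lowers P by x^m, while the goodness threshold drops from
   x^m/(1-x) to x^(m+1)/(1-x), i.e. by exactly x^m: so the endpoint conditions
   survive.  The new witness is the old one if m = n+1, and otherwise a point
   where P - X^(m-1) is not positive: there P(x) <= x^(m-1) < x^m/(1-x), since
   x > 1/2; at the endpoints P exceeds x^m/(1-x), so the point is interior. *)

Section GeomTail.
Variable R : realFieldType.

(* For 0 <= x < 1, x^j/(1-x) = \sum_(i >= j) x^i bounds the tail of degree >= j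
   of any series with coefficients in {-1,0,1}. *)
Definition geom_tail (x : R) (j : nat) : R := x ^+ j / (1 - x).

Lemma geom_tailSr (x : R) j : x != 1 -> geom_tail x j.+1 + x ^+ j = geom_tail x j.
Proof.
move=> x_neq1; have x1_neq0 : 1 - x != 0 by rewrite subr_eq0 eq_sym.
by rewrite /geom_tail exprS; field.
Qed.

Lemma ler_geom_tail (x : R) i j :
  0 <= x -> x < 1 -> (i <= j)%N -> geom_tail x j <= geom_tail x i.
Proof.
move=> x_ge0 x_lt1 le_ij.
by rewrite ler_pM2r ?invr_gt0 ?subr_gt0 // ler_wiXn2l // ltW.
Qed.

Lemma ltr_expn_geom_tail (x : R) j :
  2^-1 < x -> x < 1 -> x ^+ j < geom_tail x j.+1.
Proof.
move=> x_gt_half x_lt1; have x_gt0 : 0 < x by lra.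
have xj_gt0 : 0 < x ^+ j by rewrite exprn_gt0.
rewrite /geom_tail ltr_pdivlMr ?subr_gt0 // exprS; nra.
Qed.

Lemma geom_tail_lt_subXn (x p : R) n m :
  0 <= x -> x < 1 -> (n < m)%N ->
  geom_tail x n.+1 < p -> geom_tail x m.+1 < p - x ^+ m.
Proof.
move=> x_ge0 x_lt1 lt_nm lt_p.
have := geom_tailSr m (negbT (lt_eqF x_lt1)); have := ler_geom_tail x_ge0 x_lt1 lt_nm.
lra.
Qed.

End GeomTail.

Lemma in_B_subXn (R : realType) n m (P : {poly R}) :
  in_B n P -> (n < m)%N -> in_B m (P - 'X^m).
Proof.
move=> [P0 [Pcoef Phigh]] lt_nm; split; [|split].
- by rewrite coefB coefXn P0 (ltn_eqF (leq_ltn_trans (leq0n n) lt_nm)) subr0.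
- move=> k /andP[k_ge1 le_km]; rewrite coefB coefXn.
  have [lt_nk|le_kn] := ltnP n k.
    by rewrite Phigh // sub0r; case: (k =P m) => _; rewrite ?oppr0 eqxx ?orbT.
  by rewrite (ltn_eqF (leq_ltn_trans le_kn lt_nm)) subr0 Pcoef // k_ge1.
- move=> k lt_mk.
  by rewrite coefB coefXn Phigh ?(ltn_trans lt_nm) // (gtn_eqF lt_mk) subr0.
Qed.

Lemma not_pos_on (R : realType) (Q : {poly R}) a b :
  ~ pos_on Q a b -> exists2 x, a <= x <= b & Q.[x] <= 0.
Proof.
by move=> /existsNP[x /not_implyP[ab_x /negP]]; rewrite -leNgt; exists x.
Qed.

Lemma good_dip_below (R : realType) (P : {poly R}) n a b m :
  good P n a b -> (n < m)%N ->
  (forall k : nat, (n.+1 <= k < m)%N -> ~ pos_on (P - 'X^k) a b) ->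
  exists2 x, a < x < b & P.[x] < geom_tail x m.
Proof.
move=> [_ [[a_gt_half [lt_ab b_lt1]] [Pa [Pb [_ [x0 [ab_x0 Px0]]]]]]] lt_nm Qmin.
rewrite -/(geom_tail a n.+1) -/(geom_tail b n.+1) in Pa Pb.
have [x /andP[le_ax le_xb] Px] : exists2 x, a <= x <= b & P.[x] < geom_tail x m.
  case: m lt_nm Qmin => // k; rewrite ltnS leq_eqVlt => /predU1P[<- _|lt_nk Qmin].
    by exists x0 => //; case/andP: ab_x0 => /ltW -> /ltW ->.
  have k_range : (n.+1 <= k < k.+1)%N by rewrite lt_nk ltnSn.
  have [x /andP[le_ax le_xb] Qx] := not_pos_on (Qmin k k_range).
  rewrite hornerD hornerN hornerXn in Qx.
  exists x; first by rewrite le_ax le_xb.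
  by apply: le_lt_trans (ltr_expn_geom_tail k _ _); lra.
have a_gt0 : 0 < a by lra.
have := ler_geom_tail (ltW a_gt0) (lt_trans lt_ab b_lt1) lt_nm.
have := ler_geom_tail (ltW (lt_trans a_gt0 lt_ab)) b_lt1 lt_nm.
exists x => //; rewrite !lt_def le_ax le_xb !andbT.
by apply/andP; split; apply/eqP => eq_x; subst x; lra.
Qed.

Theorem lemma3p1 (R : realType) (P : {poly R}) (n : nat) (a b : R) (m : nat) :
  good P n a b ->
  (n.+1 <= m)%N ->
  pos_on (P - 'X^m) a b ->
  (forall k : nat, (n.+1 <= k < m)%N -> ~ pos_on (P - 'X^k) a b) ->
  good (P - 'X^m) m a b.
Proof.
move=> goodP lt_nm Qpos Qmin.
have [PB [[a_gt_half [lt_ab b_lt1]] [Pa [Pb _]]]] := goodP.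
have [x ab_x Px] := good_dip_below goodP lt_nm Qmin.
have hornerQ y : (P - 'X^m).[y] = P.[y] - y ^+ m.
  by rewrite hornerD hornerN hornerXn.
have a_gt0 : 0 < a by lra.
split; first exact: in_B_subXn PB lt_nm.
split; first by [].
rewrite !hornerQ; split.
  exact: geom_tail_lt_subXn (ltW a_gt0) (lt_trans lt_ab b_lt1) lt_nm Pa.
split; first exact: geom_tail_lt_subXn (ltW (lt_trans a_gt0 lt_ab)) b_lt1 lt_nm Pb.
split; first exact: Qpos.
exists x; split => //; rewrite hornerQ.
have lt_x1 : x < 1 by case/andP: ab_x => _ lt_xb; lra.
by have := geom_tailSr m (negbT (lt_eqF lt_x1)); rewrite -/(geom_tail x m.+1); lra.
Qed.
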